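(* Let $k$ be the quadratic eigenvalue multiplicity of the QCQP data. If $\mathcal F$ is a semidefinite face of $\Gamma$, then $\dim(\mathcal V(\mathcal F))\ge k$.
   Context: Let $N\ge1$, $m_I,m_E\ge0$, $m=m_I+m_E\ge1$, and $A_0,\dots,A_m\in\mathbb S^N$. The quadratic eigenvalue multiplicity is the largest positive integer $k$ (necessarily dividing $N$; write $N=nk$) such that for every $i\in\{0,\dots,m\}$ there exists $\mathcal A_i\in\mathbb S^n$ with $A_i=I_k\otimes\mathcal A_i$ (Kronecker product). For $\gamma\in\mathbb R^m$, $A(\gamma)=A_0+\sum_{i=1}^m\gamma_iA_i$; $\Gamma:=\{\gamma\in\mathbb R^m: A(\gamma)\succeq 0,\ \gamma_i\ge 0\ \forall i\in\{1,\dots,m_I\}\}$. A nonempty face $\mathcal F$ of $\Gamma$ is semidefinite if no $\gamma\in\mathcal F$ has $A(\gamma)\succ0$; $\mathcal V(\mathcal F):=\{v\in\mathbb R^N: A(\gamma)v=0\ \forall\gamma\in\mathcal F\}$. *)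

From HB Require Import structures.
From mathcomp Require Import all_boot all_order all_algebra.
Set Implicit Arguments. Unset Strict Implicit. Unset Printing Implicit Defensive.
Import Order.TTheory GRing.Theory Num.Theory.
Local Open Scope ring_scope.

Section Defs.
Variable R : realFieldType.

Definition mx_nat (n : nat) (B : 'M[R]_n) (r s : nat) : R :=
  match @insub _ (fun x => x < n)%N _ r, @insub _ (fun x => x < n)%N _ s with
  | Some r', Some s' => B r' s'
  | _, _ => 0
  end.

(* Kronecker product I_k (x) B : block diagonal with k copies of B;
   entry ((a*n+r),(b*n+s)) = delta_ab * B r s *)
Definition kron_Ik (k n : nat) (B : 'M[R]_n) : 'M[R]_(k * n) :=
  \matrix_(i, j) if (i %/ n == j %/ n)%N then mx_nat B (i %% n) (j %% n) else 0.

Definition sym_mx (n : nat) (B : 'M[R]_n) : Prop := B^T = B.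

Definition psd (N : nat) (C : 'M[R]_N) : Prop :=
  forall x : 'cV[R]_N, 0 <= (x^T *m C *m x) ord0 ord0.
Definition pd (N : nat) (C : 'M[R]_N) : Prop :=
  forall x : 'cV[R]_N, x != 0 -> 0 < (x^T *m C *m x) ord0 ord0.

(* k is an admissible multiplicity: N = k n and A_i = I_k (x) cA_i, cA_i in S^n *)
Definition has_qmult (N m : nat) (A : 'I_m.+1 -> 'M[R]_N) (k : nat) : Prop :=
  (0 < k)%N /\
  exists n (e : (k * n = N)%N), forall i : 'I_m.+1,
    exists cA : 'M[R]_n, sym_mx cA /\ A i = castmx (e, e) (kron_Ik k cA).

Definition is_qem (N m : nat) (A : 'I_m.+1 -> 'M[R]_N) (k : nat) : Prop :=
  has_qmult A k /\ forall k', has_qmult A k' -> (k' <= k)%N.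

(* A(gamma) = A_0 + sum_i gamma_i A_i, gamma indexed by 'I_m (gamma_(i+1) = gamma 0 i) *)
Definition Aof (N m : nat) (A : 'I_m.+1 -> 'M[R]_N) (g : 'rV[R]_m) : 'M[R]_N :=
  A ord0 + \sum_(i < m) g ord0 i *: A (lift ord0 i).

Definition Gamma (N m mI : nat) (A : 'I_m.+1 -> 'M[R]_N) (g : 'rV[R]_m) : Prop :=
  psd (Aof A g) /\ forall i : 'I_m, (i < mI)%N -> 0 <= g ord0 i.

Definition convex_set (m : nat) (S : 'rV[R]_m -> Prop) : Prop :=
  forall x y t, S x -> S y -> 0 <= t -> t <= 1 -> S (t *: x + (1 - t) *: y).

Definition is_face (m : nat) (S F : 'rV[R]_m -> Prop) : Prop :=
  (exists x, F x) /\ (forall x, F x -> S x) /\ convex_set F /\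
  forall x y t, S x -> S y -> 0 < t -> t < 1 ->
    F (t *: x + (1 - t) *: y) -> F x /\ F y.

Definition semidef_face (N m mI : nat) (A : 'I_m.+1 -> 'M[R]_N)
  (F : 'rV[R]_m -> Prop) : Prop :=
  is_face (Gamma mI A) F /\ forall g, F g -> ~ pd (Aof A g).

Definition VF (N m : nat) (A : 'I_m.+1 -> 'M[R]_N) (F : 'rV[R]_m -> Prop)
  (v : 'cV[R]_N) : Prop :=
  forall g, F g -> Aof A g *m v = 0.

(* dim(V) >= d for a subspace V of R^N given as a predicate:
   V contains d linearly independent vectors (the columns of a
   column-full-rank N x d matrix). *)
Definition dim_ge (N : nat) (V : 'cV[R]_N -> Prop) (d : nat) : Prop :=
  exists B : 'M[R]_(N, d), \rank B = d /\ forall j : 'I_d, V (col j B).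

End Defs.

From mathcomp Require Import all_boot all_order all_algebra.
From mathcomp Require Import zify ring lra.
From Stdlib Require Import Classical.
Import Order.TTheory GRing.Theory Num.Theory.
Set Implicit Arguments. Unset Strict Implicit. Unset Printing Implicit Defensive.

(* Choose [g0] in the face with [A(g0)] of maximal rank.  For psd [P] and [Q] the
   row space of [P] lies in that of [P + Q], so by convexity of the face the row
   space of every [A(g)], [g] in the face, lies in that of [A(g0)]; hence
   [ker A(g0)] is contained in [V(F)].  As the face is semidefinite, [A(g0)] has a
   nonzero kernel vector [x].  Every [A(g)] has the form [I_k (x) B], so kernels
   are stable under keeping a single [n]-block of [x] and under cyclically
   shifting the blocks; the [k] shifts of a nonzero block of [x] are independent. *)

Section BlockShift.
Variables (k n : nat) (Hkn : 0 < k * n).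

Definition bshift (s : nat) (i : 'I_(k * n)) : 'I_(k * n) :=
  Ordinal (ltn_pmod (i + s * n) Hkn).

Let n_gt0 : 0 < n. Proof. by move: Hkn; rewrite muln_gt0 => /andP[]. Qed.

Lemma ord_block_lt (i : 'I_(k * n)) : i %/ n < k.
Proof. by rewrite ltn_divLR. Qed.

Lemma bshift_mod s i : bshift s i %% n = i %% n.
Proof. by rewrite /= modn_dvdm ?dvdn_mull // addnC modnMDl. Qed.

Lemma bshift_div s i : bshift s i %/ n = (i %/ n + s) %% k.
Proof. by rewrite /= -modn_divl addnC divnMDl // addnC. Qed.

Lemma bshift_block s i j : (bshift s i %/ n == bshift s j %/ n) = (i %/ n == j %/ n).
Proof. by rewrite !bshift_div eqn_modDr !modn_small ?ord_block_lt. Qed.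

Lemma bshift_inj s : injective (bshift s).
Proof.
move=> i j eq_ij; apply/val_inj.
have /eqP eq_mod : i %% n == j %% n by rewrite -(bshift_mod s i) -(bshift_mod s j) eq_ij.
have /eqP eq_div : i %/ n == j %/ n by rewrite -(bshift_block s) eq_ij.
by rewrite /= (divn_eq i n) (divn_eq j n) eq_mod eq_div.
Qed.

Lemma bshiftD s t i : bshift s (bshift t i) = bshift (s + t) i.
Proof. by apply/val_inj; rewrite /= modnDml mulnDl; congr (_ %% _); lia. Qed.

Lemma bshiftK s i : s <= k -> bshift s (bshift (k - s) i) = i.
Proof.
by move=> le_sk; rewrite bshiftD subnKC //; apply/val_inj; rewrite /= modnDr modn_small.
Qed.

Lemma bshift_block_neq (s s' : 'I_k) i :
  s != s' -> bshift s (bshift (k - s') i) %/ n != i %/ n.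
Proof.
move=> /eqP neq; have neq_ss' : (s : nat) <> s' by move/val_inj.
rewrite bshiftD bshift_div; apply/eqP => eq_b.
have lt_b := ord_block_lt i; have lt_s := ltn_ord s; have lt_s' := ltn_ord s'.
move: (divn_eq (i %/ n + (s + (k - s'))) k); rewrite eq_b.
by case: (_ %/ k) => [|[|q]]; nia.
Qed.

End BlockShift.

Local Open Scope ring_scope.

Section PsdForms.
Variables (R : realFieldType) (N : nat).
Implicit Types (P Q : 'M[R]_N) (c w : 'cV[R]_N).

Lemma sym_formDZ P c w t : P^T = P ->
  ((c + t *: w)^T *m P *m (c + t *: w)) ord0 ord0 =
  (c^T *m P *m c) ord0 ord0 + 2 * t * (w^T *m P *m c) ord0 ord0
   + t ^+ 2 * (w^T *m P *m w) ord0 ord0.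
Proof.
move=> symP.
have form_sym : (c^T *m P *m w) ord0 ord0 = (w^T *m P *m c) ord0 ord0.
  transitivity (((c^T *m P *m w)^T) ord0 ord0); first by rewrite [RHS]mxE.
  by rewrite !trmx_mul trmxK symP mulmxA.
have -> : (c + t *: w)^T = c^T + t *: w^T by rewrite linearD linearZ.
rewrite !mulmxDl !mulmxDr -!scalemxAl -!scalemxAr.
move: form_sym; set cc := c^T *m P *m c; set cw := c^T *m P *m w.
set wc := w^T *m P *m c; set ww := w^T *m P *m w => form_sym.
by clearbody cc cw wc ww; rewrite !mxE form_sym; ring.
Qed.

(* Test [c + t e_i] with [t = - a / (q + 1)] ([q + 1] rather than [q] since [q]
   may vanish): the form becomes [- a^2 (q + 2) / (q + 1)^2]. *)
Lemma psd_form_eq0 P c : P^T = P -> psd P ->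
  (c^T *m P *m c) ord0 ord0 = 0 -> P *m c = 0.
Proof.
move=> symP psdP form_c0; apply/matrixP => i j; rewrite ord1 [RHS]mxE.
pose w : 'cV[R]_N := delta_mx i ord0.
have <- : (w^T *m P *m c) ord0 ord0 = (P *m c) i ord0.
  by rewrite -mulmxA trmx_delta -rowE mxE.
set a := (w^T *m P *m c) ord0 ord0.
have q_ge0 := psdP w; set q := (w^T *m P *m w) ord0 ord0 in q_ge0.
set t := - a / (q + 1).
have tq : t * (q + 1) = - a by rewrite /t mulfVK // lt0r_neq0 //; lra.
have := psdP (c + t *: w); rewrite sym_formDZ // form_c0 -/a -/q add0r => ge0.
have : 0 <= - (a ^+ 2 * (q + 2)).
  have -> : - (a ^+ 2 * (q + 2)) = (2 * t * a + t ^+ 2 * q) * (q + 1) ^+ 2.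
    have -> : (2 * t * a + t ^+ 2 * q) * (q + 1) ^+ 2 =
      2 * (t * (q + 1)) * a * (q + 1) + (t * (q + 1)) ^+ 2 * q by ring.
    by rewrite tq; ring.
  by rewrite mulr_ge0 ?sqr_ge0.
rewrite oppr_ge0 => le0.
have : a ^+ 2 * (q + 2) == 0 by rewrite eq_le le0 mulr_ge0 ?sqr_ge0 //; lra.
by rewrite mulf_eq0 sqrf_eq0 => /orP[/eqP // | /eqP]; lra.
Qed.

Lemma psd_not_pd_ker P : P^T = P -> psd P -> ~ pd P ->
  exists2 c : 'cV[R]_N, c != 0 & P *m c = 0.
Proof.
move=> symP psdP not_pd.
have [c nz_c not_gt0] : exists2 c : 'cV[R]_N, c != 0 & ~ 0 < (c^T *m P *m c) ord0 ord0.
  apply: NNPP => no_c; apply: not_pd => c nz_c; apply: NNPP => not_gt0.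
  by apply: no_c; exists c.
exists c => //; apply: psd_form_eq0 => //.
by have := psdP c; rewrite le_eqVlt => /orP[/eqP <- | /not_gt0].
Qed.

Lemma psdZ P (a : R) : 0 <= a -> psd P -> psd (a *: P).
Proof.
move=> a_ge0 psdP c; rewrite -scalemxAr -scalemxAl [X in _ <= X]mxE.
exact: mulr_ge0.
Qed.

Lemma psd_submx_addr P Q : P^T = P -> Q^T = Q -> psd P -> psd Q ->
  (P <= (P + Q)%R)%MS.
Proof.
move=> symP symQ psdP psdQ; rewrite submxE; apply/eqP/matrixP => i j.
pose c := col j (cokermx (P + Q)).
have PQc : (P + Q) *m c = 0 by rewrite /c colE mulmxA mulmx_coker mul0mx.
have Pc : P *m c = 0.
  apply: psd_form_eq0 => //; have := psdP c; have := psdQ c.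
  move: (congr1 (fun M => (c^T *m M) ord0 ord0) PQc).
  by rewrite mulmx0 mulmxA mulmxDr mulmxDl !mxE; lra.
transitivity ((P *m c) i ord0); last by rewrite Pc !mxE.
by rewrite [RHS]mxE [LHS]mxE; apply: eq_bigr => l _; rewrite [in RHS]mxE.
Qed.

Lemma psd_submx_scale_addr P Q (a b : R) : P^T = P -> Q^T = Q -> psd P -> psd Q ->
  0 < a -> 0 <= b -> (P <= (a *: P + b *: Q)%R)%MS.
Proof.
move=> symP symQ psdP psdQ a_gt0 b_ge0.
rewrite -(eqmx_scale _ (lt0r_neq0 a_gt0)).
apply: psd_submx_addr; rewrite ?linearZ /= ?symP ?symQ //; apply: psdZ => //.
exact: ltW.
Qed.

End PsdForms.

Lemma ex_max_nat (P : nat -> Prop) (b : nat) : (forall r, P r -> r <= b)%N ->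
  (exists r, P r) -> exists r, P r /\ forall r', P r' -> (r' <= r)%N.
Proof.
elim: b => [|b IHb] le_b [r0 Pr0].
  by exists r0; split => // r' /le_b; rewrite leqn0 => /eqP ->.
have [Pb1 | notPb1] := classic (P b.+1); first by exists b.+1; split => // r' /le_b.
apply: IHb; last by exists r0.
by move=> r Pr; have := le_b r Pr; rewrite leq_eqVlt => /orP[/eqP eq_r | //]; rewrite eq_r in Pr.
Qed.

(* The largest member is any member of maximal rank. *)
Lemma directed_submx_max (F : fieldType) (m n : nat) (S : 'M[F]_(m, n) -> Prop) :
  (exists P, S P) ->
  (forall P Q, S P -> S Q -> exists2 M, S M & (P <= M)%MS /\ (Q <= M)%MS) ->
  exists2 P0, S P0 & forall P, S P -> (P <= P0)%MS.
Proof.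
move=> [P1 SP1] directed.
have [r [[P0 SP0 rkP0] rk_max]] :
    exists r, (exists2 P, S P & \rank P = r) /\
      forall r', (exists2 P, S P & \rank P = r') -> (r' <= r)%N.
  apply: (@ex_max_nat _ n); last by exists (\rank P1), P1.
  by move=> r [P _ <-]; apply: rank_leq_col.
exists P0 => // P SP; have [M SM [P0M PM]] := directed P0 P SP0 SP.
apply: submx_trans PM _; have /leqifP := mxrank_leqif_sup P0M.
case: ifP => // _ lt_rk; have := rk_max _ (ex_intro2 _ _ M SM erefl).
by rewrite -rkP0 leqNgt lt_rk.
Qed.

Section Pencil.
Variables (R : realFieldType) (N m : nat) (A : 'I_m.+1 -> 'M[R]_N).

Lemma Aof_convex x y t :
  Aof A (t *: x + (1 - t) *: y) = t *: Aof A x + (1 - t) *: Aof A y.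
Proof.
rewrite /Aof; under eq_bigr do rewrite !mxE scalerDl -!scalerA.
rewrite big_split /= -!scaler_sumr !scalerDr addrACA -scalerDl.
by rewrite (_ : t + (1 - t) = 1) ?scale1r // addrCA subrr addr0.
Qed.

Lemma Aof_sym g : (forall i, sym_mx (A i)) -> (Aof A g)^T = Aof A g.
Proof.
move=> symA; rewrite /Aof linearD /= symA linear_sum /=; congr (_ + _).
by apply: eq_bigr => i _; rewrite linearZ /= symA.
Qed.

(* [A] at the midpoint of two points of [S] dominates [A] at both (psd_submx_scale_addr). *)
Lemma convex_psd_Aof_max (S : 'rV[R]_m -> Prop) :
  (forall i, sym_mx (A i)) -> convex_set S -> (forall g, S g -> psd (Aof A g)) ->
  (exists g, S g) ->
  exists2 g0, S g0 & forall g, S g -> (Aof A g <= Aof A g0)%MS.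
Proof.
move=> symA convS psdS [g1 Sg1].
have Aof_submx g g' (a b : R) : S g -> S g' -> 0 < a -> 0 <= b ->
    (Aof A g <= (a *: Aof A g + b *: Aof A g')%R)%MS.
  move=> Sg Sg' a_gt0 b_ge0.
  by apply: psd_submx_scale_addr; rewrite ?Aof_sym //; apply: psdS.
have half_gt0 : 0 < 2^-1 :> R by rewrite invr_gt0 ltr0n.
have half_lt1 : 2^-1 < 1 :> R by rewrite invf_lt1 ?ltr0n ?ltr1n.
have [_ [g0 Sg0 ->] max_g0] :
    exists2 M, (exists2 g, S g & M = Aof A g) &
      forall P, (exists2 g, S g & P = Aof A g) -> (P <= M)%MS.
  apply: directed_submx_max; first by exists (Aof A g1), g1.
  move=> _ _ [g Sg ->] [g' Sg' ->].
  exists (Aof A (2^-1 *: g + (1 - 2^-1) *: g')).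
    by exists (2^-1 *: g + (1 - 2^-1) *: g') => //; apply: convS => //; apply: ltW.
  rewrite Aof_convex; split.
    by apply: (Aof_submx g g'); rewrite ?subr_ge0 ?ltW.
  rewrite (addrC (2^-1 *: _)).
  by apply: (Aof_submx g' g); rewrite ?subr_gt0 ?ltW.
by exists g0 => // g Sg; apply: max_g0; exists g.
Qed.

End Pencil.

Section KronShape.
Variables (R : realFieldType) (k n : nat) (Hkn : (0 < k * n)%N).
Local Notation bshift := (bshift Hkn).

(* Exactly the matrices [I_k (x) B], described without splitting indices. *)
Definition kron_shaped (M : 'M[R]_(k * n)) :=
  (forall i j : 'I_(k * n), (i %/ n != j %/ n)%N -> M i j = 0) /\
  (forall s i j, M (bshift s i) (bshift s j) = M i j).

Lemma kron_Ik_shaped (B : 'M[R]_n) : kron_shaped (kron_Ik k B).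
Proof.
split=> [i j neq_ij | s i j]; first by rewrite mxE (negbTE neq_ij).
by rewrite !mxE bshift_block !bshift_mod.
Qed.

Lemma Aof_kron_shaped m (A : 'I_m.+1 -> 'M[R]_(k * n)) g :
  (forall i, kron_shaped (A i)) -> kron_shaped (Aof A g).
Proof.
move=> shA; split=> [i j neq_ij | s i j].
  rewrite /Aof !mxE summxE ((shA ord0).1 _ _ neq_ij) add0r.
  by apply: big1 => l _; rewrite mxE ((shA _).1 _ _ neq_ij) mulr0.
rewrite /Aof !mxE !summxE (shA ord0).2; congr (_ + _).
by apply: eq_bigr => l _; rewrite !mxE (shA _).2.
Qed.

Definition block_proj (b : nat) (x : 'cV[R]_(k * n)) : 'cV[R]_(k * n) :=
  \col_i (if (i %/ n == b)%N then x i ord0 else 0).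

Definition col_bshift (s : nat) (x : 'cV[R]_(k * n)) : 'cV[R]_(k * n) :=
  \col_i x (bshift s i) ord0.

Lemma kron_shaped_ker_block_proj M x b : kron_shaped M -> M *m x = 0 ->
  M *m block_proj b x = 0.
Proof.
move=> shM Mx0; apply/matrixP => i j; rewrite ord1 !mxE.
under eq_bigr do rewrite mxE.
have [eq_ib | neq_ib] := eqVneq (i %/ n)%N b.
- transitivity ((M *m x) i ord0); last by rewrite Mx0 mxE.
  rewrite mxE; apply: eq_bigr => l _; case: eqP => // neq_lb.
  by rewrite shM.1 ?mul0r // eq_ib; apply/eqP => eq_bl; apply: neq_lb.
- apply: big1 => l _; case: eqP => [eq_lb | _]; last by rewrite mulr0.
  by rewrite shM.1 ?mul0r // eq_lb.
Qed.

Lemma kron_shaped_ker_col_bshift M x s : kron_shaped M -> M *m x = 0 ->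
  M *m col_bshift s x = 0.
Proof.
move=> shM Mx0; apply/matrixP => i j; rewrite ord1 !mxE.
under eq_bigr do rewrite mxE -(shM.2 s).
transitivity ((M *m x) (bshift s i) ord0); last by rewrite Mx0 mxE.
by rewrite mxE [RHS](reindex_inj (@bshift_inj _ _ Hkn s)).
Qed.

(* The [k] block shifts of a vector supported on one block are independent:
   the rows [bshift (k - s) i0] of the matrix they form give a scalar matrix. *)
Lemma rank_col_bshift (x : 'cV[R]_(k * n)) i0 : x i0 ord0 != 0 ->
  \rank (\matrix_(i < k * n, s < k) block_proj (i0 %/ n) x (bshift s i) ord0) = k.
Proof.
move=> nz_x; set X := \matrix_(i, s) _.
apply/eqP; rewrite eqn_leq rank_leq_col /=.
have rowsub_X : rowsub (fun s : 'I_k => bshift (k - s) i0) X = (x i0 ord0)%:M.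
  apply/matrixP => s' s; rewrite !mxE.
  have [-> | neq_s] := eqVneq s' s.
    by rewrite bshiftK ?(ltnW (ltn_ord s)) // eqxx mulr1n.
  by rewrite (negbTE (bshift_block_neq _ _ _)) 1?eq_sym // mulr0n.
have := mxrankM_maxr (rowsub (fun s : 'I_k => bshift (k - s) i0) 1%:M) X.
rewrite -rowsubE rowsub_X mxrank_unit //.
by rewrite unitmxE det_scalar unitfE expf_neq0.
Qed.

Lemma kron_shaped_ker_rank (x : 'cV[R]_(k * n)) : x != 0 ->
  exists2 X : 'M[R]_(k * n, k), \rank X = k &
    forall M, kron_shaped M -> M *m x = 0 -> forall s, M *m col s X = 0.
Proof.
move=> nz_x; have [i0 nz_xi0] : exists i0, x i0 ord0 != 0.
  apply/existsP; apply: contraR nz_x; rewrite negb_exists => /forallP x0.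
  by apply/eqP/matrixP => i j; rewrite ord1 mxE; apply/eqP/negPn.
exists (\matrix_(i < k * n, s < k) block_proj (i0 %/ n) x (bshift s i) ord0).
  exact: rank_col_bshift.
move=> M shM Mx0 s; rewrite (_ : col _ _ = col_bshift s (block_proj (i0 %/ n) x)).
  by apply: kron_shaped_ker_col_bshift => //; apply: kron_shaped_ker_block_proj.
by apply/matrixP => i j; rewrite !mxE.
Qed.

End KronShape.

Theorem mainTheorem5 (R : realFieldType) (N mI mE : nat)
  (A : 'I_(mI + mE).+1 -> 'M[R]_N)
  (hN : (1 <= N)%N) (hm : (1 <= mI + mE)%N)
  (hsym : forall i, sym_mx (A i))
  (k : nat) (hk : is_qem A k)
  (F : 'rV[R]_(mI + mE) -> Prop) (hF : semidef_face mI A F) :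
  dim_ge (VF A F) k.
Proof.
case: hk => [[_ [n [eq_N kronA]]] _]; subst N.
have [[F_ne [F_Gamma [F_convex _]]] F_not_pd] := hF.
have psdF g : F g -> psd (Aof A g) by case/F_Gamma.
have shaped g : kron_shaped hN (Aof A g).
  apply: Aof_kron_shaped => i; have [B [_ ->]] := kronA i.
  by rewrite castmx_id; apply: kron_Ik_shaped.
have [g0 Fg0 max_g0] := convex_psd_Aof_max hsym F_convex psdF F_ne.
have [x nz_x Ax0] := psd_not_pd_ker (Aof_sym g0 hsym) (psdF g0 Fg0) (F_not_pd g0 Fg0).
have [X rkX kerX] := kron_shaped_ker_rank hN nz_x.
exists X; split => // s g Fg; have /submxP [D ->] := max_g0 g Fg.
by rewrite -mulmxA kerX ?mulmx0 ?shaped.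
Qed.
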